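(* Let $\mathcal A$ be an arrangement of $d$ lines in $\mathbb P^2$ and let $m$ be the multiplicity of one of its intersection points. (i) If $\mathcal A$ is free with exponents $d_1\le d_2$, then either $m=d_2+1$ or $m\le d_1+1$. (ii) If $\mathcal A$ is nearly free with exponents $d_1\le d_2$, then either $m=d_2$ or $m\le d_1$.
   Context: The multiplicity of an intersection point is the number of lines through it. Let $S=\mathbb C[x,y,z]$, $f$ the product of the linear forms of the lines, and $AR(f)=\{(a,b,c)\in S^3: af_x+bf_y+cf_z=0\}$. $\mathcal A$ is free with exponents $d_1\le d_2$ if $AR(f)$ is a free $S$-module with homogeneous basis of degrees $d_1,d_2$ (then $d_1+d_2=d-1$); it is nearly free with exponents $d_1\le d_2$ if $AR(f)$ has a minimal graded free resolution $0\to S(-d_2-1)\to S(-d_1)\oplus S(-d_2)^2\to AR(f)\to 0$ with $d_1+d_2=d$. *)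

From HB Require Import structures.
From mathcomp Require Import all_boot all_order all_algebra all_field.
From mathcomp Require Import Rstruct.
From mathcomp Require Import complex.
From mathcomp Require Import mpoly.
From Stdlib Require Import Reals.

Set Implicit Arguments.
Unset Strict Implicit.
Unset Printing Implicit Defensive.

Import GRing.Theory Num.Theory.
Local Open Scope ring_scope.

Definition CC : numClosedFieldType := (Rdefinitions.R)[i].

(* S = C[x,y,z], variables 'X_0 = x, 'X_1 = y, 'X_2 = z. *)
Notation SS := {mpoly CC[3]}.

Definition lin_form (a : 'rV[CC]_3) : SS :=
  \sum_(j < 3) (a 0 j)%:MP * 'X_j.

Definition line_arrangement (d : nat) (l : 'I_d -> 'rV[CC]_3) : Prop :=
  (forall i, l i != 0) /\
  (forall i j : 'I_d, i != j -> ~ exists c : CC, l i = c *: l j).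

Definition arr_poly (d : nat) (l : 'I_d -> 'rV[CC]_3) : SS :=
  \prod_(i < d) lin_form (l i).

Definition on_line (a p : 'rV[CC]_3) : bool :=
  \sum_(j < 3) a 0 j * p 0 j == 0.

Definition multiplicity (d : nat) (l : 'I_d -> 'rV[CC]_3) (p : 'rV[CC]_3) : nat :=
  #|[set i : 'I_d | on_line (l i) p]|.

Definition intersection_point (d : nat) (l : 'I_d -> 'rV[CC]_3) (p : 'rV[CC]_3) : Prop :=
  p != 0 /\ (2 <= multiplicity l p)%nat.

(* Elements of S^3 are functions 'I_3 -> S; (a,b,c) = (r 0, r 1, r 2). *)
Definition in_AR (f : SS) (r : 'I_3 -> SS) : Prop :=
  \sum_(j < 3) r j * f^`M(j) = 0.

Definition homog3 (k : nat) (r : 'I_3 -> SS) : Prop :=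
  forall j, r j \is k.-homog.

Definition free_with_exponents (f : SS) (d1 d2 : nat) : Prop :=
  (d1 <= d2)%nat /\
  exists r1 r2 : 'I_3 -> SS,
    [/\ in_AR f r1, in_AR f r2, homog3 d1 r1, homog3 d2 r2 &
      (forall r, in_AR f r ->
        exists! uv : SS * SS, forall j, r j = uv.1 * r1 j + uv.2 * r2 j)].

(* A is nearly free with exponents d1 <= d2 (d1 + d2 = d): AR(f) has a minimal
   graded free resolution
     0 -> S(-d2-1) --h--> S(-d1) (+) S(-d2)^2 --(r_0,r_1,r_2)--> AR(f) -> 0.
   Concretely: homogeneous generators r_0, r_1, r_2 of AR(f) of degrees d1, d2, d2
   (surjectivity), and the module of relations among them is free of rank one,
   generated by a nonzero h whose components are homogeneous of degrees
   d2+1-d1, 1, 1 (so that the map S(-d2-1) -> F_0 is graded of degree 0,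
   injective, with image the kernel; minimality holds since these degrees
   are positive). *)
Definition nearly_free_with_exponents (f : SS) (d d1 d2 : nat) : Prop :=
  (d1 <= d2)%nat /\ (d1 + d2 = d)%nat /\
  exists rho : 'I_3 -> ('I_3 -> SS),
  exists h : 'I_3 -> SS,
    [/\ (forall k, in_AR f (rho k)),
        (forall k, homog3 (if k == ord0 then d1 else d2) (rho k)),
        (forall r, in_AR f r ->
          exists u : 'I_3 -> SS, forall j, r j = \sum_(k < 3) u k * rho k j),
        (exists k, h k != 0) /\
        (forall k, h k \is (if k == ord0 then (d2 + 1 - d1)%nat else 1%nat).-homog) &
        (forall u : 'I_3 -> SS,
          (forall j, \sum_(k < 3) u k * rho k j = 0) <->
          (exists s : SS, forall k, u k = s * h k))].

(* Let m be the multiplicity of p and split f = g h, where g is the product of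
   the m lines through p.  Writing D_p for the derivative in the direction p,
   Euler's formula and D_p g = 0 make rho = D_p(h) (x, y, z) - d h p a syzygy of f
   of degree d - m, and rho is primitive: it is no multiple u r with u homogeneous
   of positive degree.  Expand rho in homogeneous generators of AR(f) and keep the
   component of degree d - m: generators of larger degree drop out, so when a single
   generator has degree <= d - m, primitivity forces d - m to be its degree.  If
   m > d1 (nearly free, d1 + d2 = d) or m > d1 + 1 (free), this gives d - m = d1.
   In the free case d1 + d2 = d - 1 is Saito's criterion: on a generic line,
   r1 x r2 restricts to a nonzero constant multiple of grad f. *)

From HB Require Import structures.
From mathcomp Require Import all_boot all_order all_algebra all_field.
From mathcomp Require Import Rstruct complex mpoly.
From mathcomp Require Import ring zify.

Set Implicit Arguments.
Unset Strict Implicit.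
Unset Printing Implicit Defensive.
Import GRing.Theory Num.Theory.
Local Open Scope ring_scope.

Definition i0 : 'I_3 := @Ordinal 3 0 isT.
Definition i1 : 'I_3 := @Ordinal 3 1 isT.
Definition i2 : 'I_3 := @Ordinal 3 2 isT.

Lemma big_ord3 (R : nmodType) (F : 'I_3 -> R) : \sum_(j < 3) F j = F i0 + F i1 + F i2.
Proof.
by rewrite !big_ord_recl big_ord0 addr0 addrA; congr (F _ + F _ + F _); apply: val_inj.
Qed.

Lemma ord3_ind (P : 'I_3 -> Prop) : P i0 -> P i1 -> P i2 -> forall j, P j.
Proof.
move=> h0 h1 h2 [[|[|[|k]]] hk] //.
- by rewrite (_ : Ordinal hk = i0) //; apply: val_inj.
- by rewrite (_ : Ordinal hk = i1) //; apply: val_inj.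
- by rewrite (_ : Ordinal hk = i2) //; apply: val_inj.
Qed.

Section LeadAt.
Variable R : comNzRingType.
Implicit Types (Q : {poly R}) (c : R).

Definition lead_at (k : nat) Q c := (size Q <= k.+1)%N /\ Q`_k = c.

Lemma lead_atD k Q1 Q2 c1 c2 :
  lead_at k Q1 c1 -> lead_at k Q2 c2 -> lead_at k (Q1 + Q2) (c1 + c2).
Proof.
move=> [sQ1 cQ1] [sQ2 cQ2]; split; last by rewrite coefD cQ1 cQ2.
by apply: leq_trans (size_polyD _ _) _; rewrite geq_max sQ1 sQ2.
Qed.

Lemma lead_at_sum (I : eqType) (r : seq I) k (Q : I -> {poly R}) (c : I -> R) :
  (forall i, i \in r -> lead_at k (Q i) (c i)) ->
  lead_at k (\sum_(i <- r) Q i) (\sum_(i <- r) c i).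
Proof.
elim: r => [|i r IH] hQ.
  by rewrite !big_nil; split; [rewrite size_poly0 | rewrite coef0].
rewrite !big_cons; apply: lead_atD; first by apply: hQ; rewrite mem_head.
by apply: IH => j jr; apply: hQ; rewrite inE jr orbT.
Qed.

Lemma lead_atM k1 k2 Q1 Q2 c1 c2 :
  lead_at k1 Q1 c1 -> lead_at k2 Q2 c2 -> lead_at (k1 + k2) (Q1 * Q2) (c1 * c2).
Proof.
move=> [sQ1 cQ1] [sQ2 cQ2]; split.
  by apply: leq_trans (size_mul_leq _ _) _; rewrite -subn1; lia.
rewrite coefM (bigD1 (Ordinal (leq_addr k2 k1.+1 : k1 < (k1 + k2).+1)%N)) //= addKn.
rewrite cQ1 cQ2 big1 ?addr0 // => j /eqP neq_jk1.
have [ltjk|ltkj|ejk] := ltngtP j k1.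
- by rewrite (@nth_default _ _ Q2) ?mulr0 //; apply: leq_trans sQ2 _; lia.
- by rewrite (@nth_default _ _ Q1) ?mul0r //; apply: leq_trans sQ1 _.
- by case: neq_jk1; apply: val_inj; rewrite /= ejk.
Qed.

Lemma lead_at_prod (I : Type) (r : seq I) (k : I -> nat) (Q : I -> {poly R}) (c : I -> R) :
  (forall i, lead_at (k i) (Q i) (c i)) ->
  lead_at (\sum_(i <- r) k i) (\prod_(i <- r) Q i) (\prod_(i <- r) c i).
Proof.
move=> hQ; elim: r => [|i r IH].
  by rewrite !big_nil; split; [rewrite size_poly1 | rewrite coef1].
by rewrite !big_cons; apply: lead_atM.
Qed.

Lemma lead_atX k Q c e : lead_at k Q c -> lead_at (k * e) (Q ^+ e) (c ^+ e).
Proof.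
move=> hQ; elim: e => [|e IH].
  by rewrite muln0 !expr0; split; [rewrite size_poly1 | rewrite coef1].
by rewrite !exprS mulnS; apply: lead_atM.
Qed.

Lemma lead_at_linear c0 c : lead_at 1 (c0%:P + c *: 'X) c.
Proof.
split; last by rewrite coefD coefC coefZ coefX /= add0r mulr1.
apply: leq_trans (size_polyD _ _) _; rewrite geq_max size_polyC.
by rewrite (leq_trans (leq_b1 _)) // (leq_trans (size_scale_leq _ _)) ?size_polyX.
Qed.

Lemma lead_at_size k Q c : lead_at k Q c -> c != 0 -> size Q = k.+1.
Proof.
move=> [sQ cQ] c0; apply/eqP; rewrite eqn_leq sQ /= ltnNge; apply/negP => sQk.
by move: c0; rewrite -cQ nth_default // eqxx.
Qed.

End LeadAt.

Lemma lead_at_root (F : closedFieldType) k (Q : {poly F}) c :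
  lead_at k Q c -> c != 0 -> (0 < k)%N -> exists x, root Q x.
Proof.
move=> hQ c0 k0; apply/closed_rootP.
by rewrite (lead_at_size hQ c0) eqSS -lt0n.
Qed.

Section LineRestriction.
Variables (R : comNzRingType) (n : nat) (a b : 'I_n -> R).

Definition line_restr : {mpoly R[n]} -> {poly R} :=
  mmap (@polyC R) (fun j => (a j)%:P + b j *: 'X).

HB.instance Definition _ := GRing.RMorphism.on line_restr.

Lemma horner_line_restr P s : (line_restr P).[s] = P.@[fun j => a j + s * b j].
Proof.
rewrite /line_restr /mmap mevalE horner_sum; apply: eq_bigr => m _.
rewrite hornerM hornerC /mmap1 horner_prod; congr (_ * _); apply: eq_bigr => i _.
by rewrite horner_exp hornerD hornerC hornerZ hornerX mulrC.
Qed.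

Lemma lead_at_line_restr P e : P \is e.-homog -> lead_at e (line_restr P) P.@[b].
Proof.
move=> /dhomogP homP; rewrite /line_restr /mmap mevalE; apply: lead_at_sum => m mP.
rewrite -(homP m mP) /= mdegE -[\sum_i _]add0n.
apply: lead_atM; first by split; [rewrite size_polyC leq_b1 | rewrite coefC].
apply: lead_at_prod => i; rewrite -{1}[m i]mul1n.
by apply: lead_atX; apply: lead_at_linear.
Qed.

End LineRestriction.

Lemma digits_inj n N (u v : 'I_n -> nat) :
  (forall i, u i < N)%N -> (forall i, v i < N)%N ->
  (\sum_(i < n) u i * N ^ i = \sum_(i < n) v i * N ^ i)%N -> u =1 v.
Proof.
elim: n u v => [|n IH] u v ltuN ltvN; first by move=> _ [].
have N0 : (0 < N)%N by apply: leq_ltn_trans (ltuN ord0).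
have shift w : (\sum_(i < n) w (lift ord0 i) * N ^ lift ord0 i
                = N * \sum_(i < n) w (lift ord0 i) * N ^ i)%N.
  by rewrite big_distrr; apply: eq_bigr => i _; rewrite /= /bump add1n expnS mulnCA.
rewrite !big_ord_recl !expn0 !muln1 !shift => eq_sum.
have eq0 : u ord0 = v ord0.
  move/(congr1 (modn^~ N)): eq_sum.
  by rewrite ![(N * _)%N]mulnC !(addnC (u _)) !(addnC (v _)) !modnMDl !modn_small.
have /IH eq_tail : (\sum_(i < n) u (lift ord0 i) * N ^ i = \sum_(i < n) v (lift ord0 i) * N ^ i)%N.
  by apply/eqP; rewrite -(eqn_pmul2l N0) -(eqn_add2l (u ord0)) {2}eq0 eq_sum.
move=> j; case: (unliftP ord0 j) => [k ->|->] //.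
exact: eq_tail.
Qed.

Section NonVanishing.
Variable R : numDomainType.

Lemma poly_nonroot (Q : {poly R}) : Q != 0 -> exists x, ~~ root Q x.
Proof.
move=> Q0; pose xs := [seq (i%:R : R) | i <- iota 0 (size Q)].
have uniq_xs : uniq xs by rewrite map_inj_uniq ?iota_uniq // => i j /eqP; rewrite eqr_nat => /eqP.
have [all_root|/allPn[x _ nroot]] := boolP (all (root Q) xs); last by exists x.
by have := max_poly_roots Q0 all_root uniq_xs; rewrite size_map size_iota ltnn.
Qed.

Lemma mpoly_nonroot n (P : {mpoly R[n]}) : P != 0 -> exists v, P.@[v] != 0.
Proof.
move=> P0; set N := msize P.
(* Kronecker substitution x_j := t ^ (N ^ j) separates the monomials of P. *)
pose enc (m : 'X_{1..n}) := (\sum_(i < n) m i * N ^ i)%N.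
pose Q := mmap (@polyC R) (fun j => 'X^(N ^ j)) P.
have mmap1E m : mmap1 (fun j => 'X^(N ^ j)) m = 'X^(enc m) :> {poly R}.
  by rewrite /mmap1 -prodrXr; apply: eq_bigr => i _; rewrite -exprM mulnC.
have enc_inj : {in msupp P &, injective enc}.
  have digit m : m \in msupp P -> forall i, (m i < N)%N.
    move=> mP i; apply: leq_ltn_trans (msize_mdeg_lt mP).
    by rewrite mdegE (bigD1 i) //= leq_addr.
  by move=> m m' mP m'P /digits_inj eq_mm'; apply/mnmP; apply: eq_mm'; apply: digit.
have Q0 : Q != 0.
  have [m mP] : exists m, m \in msupp P.
    by case E: (msupp P) => [|m s]; [move: P0; rewrite -msupp_eq0 E | exists m; rewrite mem_head].
  apply/eqP => /(congr1 (fun q : {poly R} => q`_(enc m))).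
  rewrite coef0 /Q /mmap coef_sum (bigD1_seq m) ?msupp_uniq //= big1_seq.
    by rewrite addr0 mmap1E coefCM coefXn eqxx mulr1 => /eqP; rewrite mcoeff_eq0 mP.
  move=> m' /andP[neq_m'm m'P]; rewrite mmap1E coefCM coefXn.
  case: eqP => [eq_enc|_]; last by rewrite mulr0.
  by rewrite (enc_inj _ _ m'P mP (esym eq_enc)) eqxx in neq_m'm.
have [x Qx] := poly_nonroot Q0; exists (fun j => x ^+ (N ^ j)).
move: Qx; rewrite /root /Q /mmap mevalE horner_sum.
congr (_ != 0); apply: eq_bigr => m _; rewrite hornerM hornerC /mmap1 horner_prod.
by congr (_ * _); apply: eq_bigr => i _; rewrite horner_exp horner_exp hornerX.
Qed.

End NonVanishing.

Lemma vec_eq0_or_neq0 (R : zmodType) n (u : 'I_n -> R) :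
  (forall k, u k = 0) \/ exists k, u k != 0.
Proof.
have [/existsP uk|/existsPn u0] := boolP [exists k, u k != 0]; [right | left] => //.
by move=> k; apply/eqP; rewrite -[_ == _]negbK u0.
Qed.

Section Vectors.
Variable R : comNzRingType.
Implicit Types u v w : 'I_3 -> R.

Definition dot u v : R := \sum_(j < 3) u j * v j.

Definition cross u v : 'I_3 -> R := fun k =>
  if val k == 0%N then u i1 * v i2 - u i2 * v i1
  else if val k == 1%N then u i2 * v i0 - u i0 * v i2
  else u i0 * v i1 - u i1 * v i0.

Definition ek (k : 'I_3) : 'I_3 -> R := fun j => (j == k)%:R.

Lemma dotE u v : dot u v = u i0 * v i0 + u i1 * v i1 + u i2 * v i2.
Proof. exact: big_ord3. Qed.

Lemma dotC u v : dot u v = dot v u.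
Proof. by rewrite !dotE; ring. Qed.

Lemma dot_ek u k : dot u (ek k) = u k.
Proof.
rewrite /dot (bigD1 k) //= big1 ?addr0 /ek ?eqxx ?mulr1 // => j /negbTE ->.
by rewrite mulr0.
Qed.

Lemma crossC u v k : cross u v k = - cross v u k.
Proof. by move: k; apply: ord3_ind; rewrite /cross /=; ring. Qed.

Lemma dot_cross_cyc u v w : dot u (cross v w) = dot v (cross w u).
Proof. by rewrite !dotE /cross /=; ring. Qed.

Lemma dot_cross_self u v : dot u (cross u v) = 0.
Proof. by rewrite !dotE /cross /=; ring. Qed.

Lemma cross_cross u v w k : cross (cross u v) w k = v k * dot u w - u k * dot v w.
Proof. by rewrite !dotE; move: k; apply: ord3_ind; rewrite /cross /=; ring. Qed.

Lemma cross_cross_common u v w k : cross (cross u w) (cross v w) k = dot u (cross v w) * w k.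
Proof. by rewrite !dotE; move: k; apply: ord3_ind; rewrite /cross /=; ring. Qed.

Lemma cross_lin_comb (u v r1 r2 : 'I_3 -> R) a1 a2 b1 b2 :
  (forall j, u j = a1 * r1 j + a2 * r2 j) -> (forall j, v j = b1 * r1 j + b2 * r2 j) ->
  forall k, cross u v k = (a1 * b2 - b1 * a2) * cross r1 r2 k.
Proof. by move=> eu ev; apply: ord3_ind; rewrite /cross /= !eu !ev; ring. Qed.

Lemma dot_cross_line u v w s : dot u (cross v (fun j => w j + s * u j)) = dot u (cross v w).
Proof. by rewrite !dotE /cross /=; ring. Qed.

Lemma cross_line_self u w s k : cross (fun j => w j + s * u j) w k = s * cross u w k.
Proof. by move: k; apply: ord3_ind; rewrite /cross /=; ring. Qed.

Lemma cross_prop_eq0 u v c : (forall j, u j = c * v j) -> forall k, cross u v k = 0.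
Proof. by move=> uv; apply: ord3_ind; rewrite /cross /= !uv; ring. Qed.

Lemma dot_cross_ek u v k : dot u (cross v (ek k)) = cross u v k.
Proof. by move: k; apply: ord3_ind; rewrite dotE /cross /ek /=; ring. Qed.

Lemma cross_eq0 u v : (forall k, cross u v k = 0) -> forall i j, u i * v j = u j * v i.
Proof.
move=> uv0.
have [e0 e1 e2] : [/\ u i1 * v i2 = u i2 * v i1, u i2 * v i0 = u i0 * v i2
                    & u i0 * v i1 = u i1 * v i0].
  by split; apply/eqP; rewrite -subr_eq0; apply/eqP; [exact: uv0 i0 | exact: uv0 i1 | exact: uv0 i2].
by apply: ord3_ind; apply: ord3_ind; rewrite ?e0 ?e1 ?e2.
Qed.

End Vectors.

Lemma cross_eq0_prop (F : fieldType) (u v : 'I_3 -> F) i :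
  (forall k, cross u v k = 0) -> v i != 0 -> forall k, u k = u i / v i * v k.
Proof. by move=> uv0 vi k; rewrite mulrAC -(cross_eq0 uv0 k i) mulfK. Qed.

Lemma cross_ek_neq0 (F : fieldType) (u : 'I_3 -> F) :
  (exists j, u j != 0) -> exists k j, cross u (ek F k) j != 0.
Proof.
move=> [j uj]; have [|] := vec_eq0_or_neq0 (cross u (ek F i0)); last by exists i0.
have [|] := vec_eq0_or_neq0 (cross u (ek F i1)); last by exists i1.
move=> /cross_eq0_prop u_e1 /cross_eq0_prop u_e0.
have ekk k : ek F k k != 0 by rewrite /ek eqxx oner_eq0.
move: uj; have {u_e0 u_e1}-> : u j = 0.
  move: j; apply: ord3_ind;
    by rewrite ?(u_e1 i1 (ekk i1) i0) ?(u_e0 i0 (ekk i0) i1) ?(u_e0 i0 (ekk i0) i2) /ek /= mulr0.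
by rewrite eqxx.
Qed.

Section MorphVectors.
Variables (R S : comNzRingType) (f : {rmorphism R -> S}).
Implicit Types u v : 'I_3 -> R.

Lemma rmorph_dot u v : f (dot u v) = dot (f \o u) (f \o v).
Proof. by rewrite !dotE !rmorphD !rmorphM. Qed.

Lemma rmorph_cross u v k : f (cross u v k) = cross (f \o u) (f \o v) k.
Proof. by move: k; apply: ord3_ind; rewrite /cross /= rmorphB !rmorphM. Qed.

Lemma rmorph_ek k j : f (ek R k j) = ek S k j.
Proof. exact: rmorph_nat. Qed.

Lemma rmorph_cross_ek k u j : f (cross (ek R k) u j) = cross (ek S k) (f \o u) j.
Proof. by rewrite rmorph_cross /cross /= !rmorph_ek. Qed.

End MorphVectors.


Section VectorFieldDerivation.
Variables (R : comNzRingType) (n : nat).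
Implicit Types (P Q : {mpoly R[n]}) (v : 'I_n -> {mpoly R[n]}).

Definition vderiv v P : {mpoly R[n]} := \sum_(j < n) v j * P^`M(j).

Lemma vderivM v P Q : vderiv v (P * Q) = vderiv v P * Q + P * vderiv v Q.
Proof.
rewrite /vderiv mulr_suml mulr_sumr -big_split; apply: eq_bigr => j _.
by rewrite /= mderivM; ring.
Qed.

Lemma vderivC v c : vderiv v c%:MP = 0.
Proof. by rewrite /vderiv big1 // => j _; rewrite mderivC mulr0. Qed.

Lemma meval_vderiv v P x :
  (vderiv v P).@[x] = \sum_(j < n) (v j).@[x] * (P^`M(j)).@[x].
Proof. by rewrite /vderiv raddf_sum; apply: eq_bigr => j _; rewrite /= mevalM. Qed.

Lemma vderiv1 v : vderiv v 1 = 0.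
Proof. by rewrite -mpolyC1 vderivC. Qed.

Definition dderiv (c : 'I_n -> R) P := vderiv (fun j => (c j)%:MP) P.

Definition euler P := vderiv (fun j => 'X_j) P.

Lemma dderivM c P Q : dderiv c (P * Q) = dderiv c P * Q + P * dderiv c Q.
Proof. exact: vderivM. Qed.

Lemma eulerM P Q : euler (P * Q) = euler P * Q + P * euler Q.
Proof. exact: vderivM. Qed.

Lemma dderiv1 c : dderiv c 1 = 0.
Proof. exact: vderiv1. Qed.

Lemma euler1 : euler 1 = 0.
Proof. exact: vderiv1. Qed.

Lemma meval_dderiv c P x : (dderiv c P).@[x] = \sum_(j < n) c j * (P^`M(j)).@[x].
Proof. by rewrite meval_vderiv; apply: eq_bigr => j _; rewrite mevalC. Qed.

Lemma meval_euler P x : (euler P).@[x] = \sum_(j < n) x j * (P^`M(j)).@[x].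
Proof. by rewrite meval_vderiv; apply: eq_bigr => j _; rewrite mevalXU. Qed.

Lemma vderiv_euler_dderiv A B c P :
  vderiv (fun j => A * 'X_j - B * (c j)%:MP) P = A * euler P - B * dderiv c P.
Proof.
rewrite /euler /dderiv /vderiv !mulr_sumr -sumrB; apply: eq_bigr => j _.
by rewrite mulrBl !mulrA.
Qed.

End VectorFieldDerivation.

Lemma mderivXU (R : comNzRingType) n (k j : 'I_n) :
  ('X_k : {mpoly R[n]})^`M(j) = (k == j)%:R.
Proof.
rewrite mderivX mnm1E; case: eqP => [->|_]; last by rewrite scale0r.
rewrite scale1r (_ : (U_(j) - U_(j))%MM = 0%MM) ?mpolyX0 //.
by apply/mnmP => i; rewrite mnmBE subnn mnm0E.
Qed.

Definition rv (a : 'rV[CC]_3) : 'I_3 -> CC := fun j => a 0 j.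

Definition vlin_form (w : 'I_3 -> CC) : SS := lin_form (\row_j w j).

Lemma mderiv_lin_form a j : (lin_form a)^`M(j) = (a 0 j)%:MP.
Proof.
rewrite /lin_form linear_sum (bigD1 j) //= big1 => [|k /negbTE ne_kj].
  by rewrite mderiv_mulC mderivXU eqxx mulr1 addr0.
by rewrite mderiv_mulC mderivXU ne_kj mulr0.
Qed.

Lemma meval_lin_form a x : (lin_form a).@[x] = dot (rv a) x.
Proof. by rewrite /lin_form raddf_sum; apply: eq_bigr => j _; rewrite /= mevalM mevalC mevalXU. Qed.

Lemma meval_vlin_form w x : (vlin_form w).@[x] = dot w x.
Proof. by rewrite meval_lin_form; apply: eq_bigr => k _; rewrite /rv mxE. Qed.

Lemma lin_form_homog a : lin_form a \is 1.-homog.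
Proof.
apply: rpred_sum => k _; rewrite mul_mpolyC; apply: dhomogZ.
by rewrite (@dhomogX _ _ _ _ U_(k)) /= mdeg1.
Qed.

Lemma lin_form_neq0 a : a != 0 -> lin_form a != 0.
Proof.
move=> a0; have [a_eq0|[k ak]] := vec_eq0_or_neq0 (rv a).
  by case/negP: a0; apply/eqP/rowP => k; rewrite mxE; apply: a_eq0.
by apply: contra ak => /eqP la0; rewrite -[rv a k]dot_ek -meval_lin_form la0 meval0.
Qed.

Lemma vlin_form_neq0 w : (exists k, w k != 0) -> vlin_form w != 0.
Proof.
case=> k wk; apply: lin_form_neq0; apply: contra wk => /eqP w0.
by have := congr1 (fun M : 'rV[CC]_3 => M 0 k) w0; rewrite !mxE => ->.
Qed.

Lemma dderiv_lin_form c a : dderiv c (lin_form a) = (dot (rv a) c)%:MP.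
Proof.
rewrite /dderiv /vderiv /dot rmorph_sum; apply: eq_bigr => j _.
by rewrite mderiv_lin_form -rmorphM mulrC.
Qed.

Lemma euler_lin_form a : euler (lin_form a) = lin_form a.
Proof. by apply: eq_bigr => j _; rewrite mderiv_lin_form mulrC. Qed.

Section LineProducts.
Variables (d : nat) (l : 'I_d -> 'rV[CC]_3).

Definition lprod (s : seq 'I_d) : SS := \prod_(i <- s) lin_form (l i).

Lemma lprod_cons i s : lprod (i :: s) = lin_form (l i) * lprod s.
Proof. exact: big_cons. Qed.

Lemma lprod_nil : lprod [::] = 1.
Proof. exact: big_nil. Qed.

Lemma euler_lprod s : euler (lprod s) = (size s)%:R * lprod s.
Proof.
elim: s => [|i s IH]; first by rewrite lprod_nil euler1 mul0r.
by rewrite lprod_cons eulerM IH euler_lin_form /= -[(size s).+1]addn1 natrD; ring.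
Qed.

Lemma lprod_homog s : lprod s \is (size s).-homog.
Proof.
elim: s => [|i s IH]; first by rewrite lprod_nil dhomog1.
by rewrite lprod_cons /= -[(size s).+1]add1n; apply: dhomogM (lin_form_homog _) IH.
Qed.

Lemma dderiv_lprod_homog c s : dderiv c (lprod s) \is (size s).-1.-homog.
Proof.
elim: s => [|i s IH]; first by rewrite lprod_nil dderiv1 dhomog0.
rewrite lprod_cons dderivM dderiv_lin_form /=; apply: dhomogD.
  by rewrite mul_mpolyC; apply/dhomogZ/lprod_homog.
case: s IH => [|j s] IH; first by rewrite lprod_nil dderiv1 mulr0 dhomog0.
by rewrite /= -[(size s).+1]add1n; apply: dhomogM (lin_form_homog _) IH.
Qed.

Lemma dderiv_lprod_eq0 c s :
  (forall i, i \in s -> dot (rv (l i)) c = 0) -> dderiv c (lprod s) = 0.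
Proof.
elim: s => [|i s IH] sc0; first by rewrite lprod_nil dderiv1.
rewrite lprod_cons dderivM dderiv_lin_form sc0 ?mem_head // IH ?mulr0 ?mul0r ?addr0 //.
by move=> j js; apply: sc0; rewrite inE js orbT.
Qed.

Lemma meval_lprod s x : (lprod s).@[x] = \prod_(i <- s) dot (rv (l i)) x.
Proof.
elim: s => [|i s IH]; first by rewrite lprod_nil big_nil meval1.
by rewrite lprod_cons big_cons mevalM meval_lin_form IH.
Qed.

Lemma meval_lprod_eq0 s x : (lprod s).@[x] = 0 -> exists2 i, i \in s & dot (rv (l i)) x = 0.
Proof. by rewrite meval_lprod => /eqP; rewrite prodf_seq_eq0 => /hasP[i si /eqP]; exists i. Qed.

Lemma lprod_singular s c x : uniq s ->
  (lprod s).@[x] = 0 -> (dderiv c (lprod s)).@[x] = 0 ->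
  (exists i j, [/\ i \in s, j \in s, i != j, dot (rv (l i)) x = 0 & dot (rv (l j)) x = 0])
  \/ (exists2 i, i \in s & dot (rv (l i)) x = 0 /\ dot (rv (l i)) c = 0).
Proof.
elim: s => [|i s IH]; first by rewrite lprod_nil meval1 => _ /eqP; rewrite oner_eq0.
rewrite /= => /andP[i_s uniq_s].
rewrite lprod_cons dderivM dderiv_lin_form !mevalD !mevalM meval_lin_form !mevalC.
have [ix0|ix0] := eqVneq (dot (rv (l i)) x) 0.
  rewrite ix0 !mul0r addr0 => _ /eqP; rewrite mulf_eq0 => /orP[/eqP ic0|/eqP sx0].
    by right; exists i; rewrite ?mem_head.
  have [j js jx0] := meval_lprod_eq0 sx0; left; exists i, j; split=> //.
  - exact: mem_head.
  - by rewrite inE js orbT.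
  - by apply: contraNneq i_s => ->.
move=> /eqP; rewrite mulf_eq0 (negbTE ix0) /= => /eqP sx0.
rewrite sx0 mulr0 add0r => /eqP; rewrite mulf_eq0 (negbTE ix0) /= => /eqP dsx0.
case: (IH uniq_s sx0 dsx0) => [[j [k [js ks jk jx0 kx0]]]|[j js jx0]].
  by left; exists j, k; rewrite !inE js ks !orbT.
by right; exists j; rewrite ?inE ?js ?orbT.
Qed.

End LineProducts.

Lemma dderiv_ek (R : comNzRingType) k (P : {mpoly R[3]}) : dderiv (ek R k) P = P^`M(k).
Proof.
rewrite /dderiv /vderiv (bigD1 k) //= big1 ?addr0 /ek ?eqxx ?mul1r // => j /negbTE ->.
by rewrite mul0r.
Qed.

Section Arrangement.
Variables (d : nat) (l : 'I_d -> 'rV[CC]_3).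
Hypothesis arr : line_arrangement l.

Definition meet (i j : 'I_d) : 'I_3 -> CC := cross (rv (l i)) (rv (l j)).

Lemma line_neq0 i : exists k, rv (l i) k != 0.
Proof.
have [l0|//] := vec_eq0_or_neq0 (rv (l i)).
by case/negP: (arr.1 i); apply/eqP/rowP => k; rewrite mxE; apply: l0.
Qed.

Lemma meet_neq0 i j : i != j -> exists k, meet i j k != 0.
Proof.
move=> ij; have [meet0|//] := vec_eq0_or_neq0 (meet i j).
have [k0 ljk0] := line_neq0 j.
case: (arr.2 i j ij); exists (l i 0 k0 / l j 0 k0); apply/rowP => k.
by rewrite mxE; apply: (cross_eq0_prop meet0 ljk0 k).
Qed.

Lemma cross_meet_eq0 i j x :
  dot (rv (l i)) x = 0 -> dot (rv (l j)) x = 0 -> forall k, cross (meet i j) x k = 0.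
Proof. by move=> lix ljx k; rewrite cross_cross lix ljx !mulr0 subrr. Qed.

Lemma cross_meet_neq0 i j x :
  i != j -> dot (rv (l i)) x != 0 -> exists k, cross (meet i j) x k != 0.
Proof.
move=> ij lix; have [meetx0|//] := vec_eq0_or_neq0 (cross (meet i j) x).
have [k0 xk0] : exists k, x k != 0.
  have [x0|//] := vec_eq0_or_neq0 x.
  by move: lix; rewrite dotE !x0 !mulr0 !addr0 eqxx.
have meetE := cross_eq0_prop meetx0 xk0.
have : dot (rv (l i)) (meet i j) = meet i j k0 / x k0 * dot (rv (l i)) x.
  by rewrite /dot mulr_sumr; apply: eq_bigr => k _; rewrite meetE mulrCA.
rewrite dot_cross_self => /esym/eqP; rewrite mulf_eq0 (negbTE lix) orbF => /eqP c0.
have [k] := meet_neq0 ij; by rewrite meetE c0 mul0r eqxx.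
Qed.

Lemma arr_poly_lprod : arr_poly l = lprod l (index_enum 'I_d).
Proof. by []. Qed.

Lemma arr_poly_neq0 : arr_poly l != 0.
Proof. by apply/prodf_neq0 => i _; apply/lin_form_neq0/(arr.1 i). Qed.

Lemma size_index_enum_ord : size (index_enum 'I_d) = d.
Proof. by rewrite -[RHS]card_ord -sum1_card -sum1_size. Qed.

Lemma dot_line_neq0 i x : (arr_poly l).@[x] != 0 -> dot (rv (l i)) x != 0.
Proof.
apply: contraNneq => lix0; rewrite arr_poly_lprod meval_lprod.
by rewrite (bigD1_seq i) ?mem_index_enum ?index_enum_uniq //= lix0 mul0r.
Qed.

Lemma euler_arr_poly : euler (arr_poly l) = d%:R * arr_poly l.
Proof. by rewrite arr_poly_lprod euler_lprod size_index_enum_ord. Qed.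

Lemma arr_poly_grad_homog j : (arr_poly l)^`M(j) \is d.-1.-homog.
Proof.
have := dderiv_lprod_homog l (ek CC j) (index_enum 'I_d).
by rewrite size_index_enum_ord -arr_poly_lprod dderiv_ek.
Qed.

Lemma meval_arr_poly_eq0 x : (0 < d)%N ->
  (forall j, ((arr_poly l)^`M(j)).@[x] = 0) -> (arr_poly l).@[x] = 0.
Proof.
move=> d0 grad0; have := congr1 (meval x) euler_arr_poly.
rewrite meval_euler big1 => [|j _]; last by rewrite grad0 mulr0.
move/esym/eqP; rewrite mevalM mevalMn meval1 mulf_eq0 pnatr_eq0.
by rewrite (negbTE (lt0n_neq0 d0)) => /eqP.
Qed.

Lemma arr_poly_grad_eq0 x : (0 < d)%N ->
  (forall j, ((arr_poly l)^`M(j)).@[x] = 0) ->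
  exists i j, [/\ i != j, dot (rv (l i)) x = 0 & dot (rv (l j)) x = 0].
Proof.
move=> d0 grad0; have fx0 := meval_arr_poly_eq0 d0 grad0.
have on_line_k k : (exists i j, [/\ i != j, dot (rv (l i)) x = 0 & dot (rv (l j)) x = 0])
    \/ exists i, dot (rv (l i)) x = 0 /\ rv (l i) k = 0.
  have := lprod_singular (c := ek CC k) (index_enum_uniq 'I_d) fx0.
  rewrite -arr_poly_lprod dderiv_ek grad0 => /(_ erefl).
  case=> [[i [j [_ _ ij lix ljx]]]|[i _ [lix lik]]]; first by left; exists i, j.
  by right; exists i; rewrite -dot_ek.
case: (on_line_k i0) => [//|[a [lax la0]]].
case: (on_line_k i1) => [//|[b [lbx lb1]]].
case: (on_line_k i2) => [//|[c [lcx lc2]]].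
have [eq_ab|ab] := eqVneq a b; last by exists a, b.
have [eq_ac|ac] := eqVneq a c; last by exists a, c.
subst b c.
have [k] := line_neq0 a; move: k; apply: ord3_ind; by rewrite ?la0 ?lb1 ?lc2 eqxx.
Qed.

End Arrangement.

Lemma pihomogM_homog n (R : comNzRingType) (k e : nat) (U r : {mpoly R[n]}) :
  r \is e.-homog ->
  pihomog mdeg k (U * r) = if (e <= k)%N then pihomog mdeg (k - e) U * r else 0.
Proof.
move=> hr.
have piXr m : pihomog mdeg k ('X_[m] * r) = if (mdeg m + e == k)%N then 'X_[m] * r else 0.
  have hX : 'X_[m] * r \is (mdeg m + e).-homog by apply: dhomogM => //; rewrite dhomogX.
  by case: eqP => [<-|ne]; [rewrite pihomog_dE | apply: pihomog_ne0 hX; apply/eqP].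
rewrite {1}[U]mpolyE mulr_suml raddf_sum /=.
case: ifP => le_ek.
  rewrite [X in pihomog _ _ X]mpolyE raddf_sum mulr_suml /=; apply: eq_bigr => m _.
  rewrite -scalerAl !linearZ /= -scalerAl piXr pihomogX; congr (_ *: _).
  case: eqP => [e1|ne1]; case: eqP => [e2|ne2] //; rewrite ?mul0r //; exfalso.
  - by change (mdeg m <> k - e)%N in ne2; lia.
  - by change (mdeg m = k - e)%N in e2; lia.
apply: big1 => m _; rewrite -scalerAl linearZ /= piXr.
by case: eqP => [e1|_]; [exfalso; move: le_ek; lia | rewrite scaler0].
Qed.

Section PointSyzygy.
Variables (d : nat) (l : 'I_d -> 'rV[CC]_3) (p : 'rV[CC]_3).
Hypothesis arr : line_arrangement l.
Hypothesis p_int : intersection_point l p.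

Local Notation P := (rv p).

Definition lines_through := [seq i <- index_enum 'I_d | on_line (l i) p].
Definition lines_off := [seq i <- index_enum 'I_d | ~~ on_line (l i) p].

Local Notation g := (lprod l lines_through).
Local Notation h := (lprod l lines_off).

Lemma arr_poly_split : arr_poly l = g * h.
Proof. by rewrite /arr_poly (bigID (fun i => on_line (l i) p)) /= /lprod !big_filter. Qed.

Lemma multiplicityE : multiplicity l p = size lines_through.
Proof. by rewrite /multiplicity cardsE size_filter -sum1_count -sum1_card; apply: eq_bigl. Qed.

Lemma size_lines_through_off : (size lines_through + size lines_off)%N = d.
Proof. by rewrite !size_filter count_predC size_index_enum_ord. Qed.

Lemma multiplicity_gt0 : (0 < multiplicity l p)%N.
Proof. exact: leq_trans p_int.2. Qed.

Lemma arr_size_gt0 : (0 < d)%N.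
Proof. by rewrite -size_lines_through_off -multiplicityE ltn_addr ?multiplicity_gt0. Qed.

Lemma point_neq0 : exists k, P k != 0.
Proof.
have [p0|//] := vec_eq0_or_neq0 P.
by case/negP: p_int.1; apply/eqP/rowP => k; rewrite mxE; apply: p0.
Qed.

Lemma uniq_lines_off : uniq lines_off.
Proof. exact/filter_uniq/index_enum_uniq. Qed.

Lemma dot_lines_off i : i \in lines_off -> dot (rv (l i)) P != 0.
Proof. by rewrite mem_filter => /andP[]. Qed.

Lemma meval_lines_off_neq0 : h.@[P] != 0.
Proof. by rewrite meval_lprod prodf_seq_neq0; apply/allP => i /dot_lines_off. Qed.

Definition point_syz (j : 'I_3) : SS := dderiv P h * 'X_j - d%:R * h * (P j)%:MP.

Lemma point_syz_AR : in_AR (arr_poly l) point_syz.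
Proof.
have dderiv_f : dderiv P (arr_poly l) = g * dderiv P h.
  rewrite arr_poly_split dderivM dderiv_lprod_eq0 ?mul0r ?add0r // => i.
  by rewrite mem_filter => /andP[/eqP].
change (vderiv point_syz (arr_poly l) = 0).
rewrite vderiv_euler_dderiv euler_arr_poly dderiv_f arr_poly_split; ring.
Qed.

Lemma point_syz_homog j : point_syz j \is (size lines_off).-homog.
Proof.
apply: rpredB; last first.
  have -> : d%:R * h * (P j)%:MP = (d%:R * P j) *: h.
    by rewrite -mul_mpolyC rmorphM rmorph_nat mulrAC.
  exact/dhomogZ/lprod_homog.
case E: lines_off => [|i s]; first by rewrite lprod_nil dderiv1 mul0r rpred0.
rewrite /= -[(size s).+1]addn1; apply: dhomogM; first exact: (dderiv_lprod_homog l P (i :: s)).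
by rewrite (@dhomogX _ _ _ _ U_(j)) /= mdeg1.
Qed.

Lemma meval_point_syz j : (point_syz j).@[P] = - (multiplicity l p)%:R * h.@[P] * P j.
Proof.
have := congr1 (meval P) (euler_lprod l lines_off).
rewrite meval_euler mevalM mevalMn meval1 -meval_dderiv => euler_h.
rewrite /point_syz mevalB !mevalM mevalMn meval1 mevalXU mevalC euler_h.
have -> : d%:R = (multiplicity l p)%:R + (size lines_off)%:R :> CC.
  by rewrite -natrD multiplicityE size_lines_through_off.
ring.
Qed.

Lemma meval_point_syz_neq0 k : P k != 0 -> (point_syz k).@[P] != 0.
Proof.
move=> Pk; rewrite meval_point_syz !mulf_neq0 ?oppr_eq0 ?pnatr_eq0 //.
  exact: lt0n_neq0 multiplicity_gt0.
exact: meval_lines_off_neq0.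
Qed.

Lemma exists_generic_direction (u : SS) : u != 0 ->
  exists b, [/\ u.@[b] != 0, exists k, cross b P k != 0 &
    forall i j, i \in lines_off -> j \in lines_off -> i != j ->
      dot b (cross (meet l i j) P) != 0].
Proof.
move=> u0; have [k [k' Pk]] := cross_ek_neq0 point_neq0.
pose Phi := u * vlin_form (cross P (ek CC k)) *
  \prod_(i <- lines_off) \prod_(j <- lines_off | i != j) vlin_form (cross (meet l i j) P).
have Phi0 : Phi != 0.
  rewrite !mulf_neq0 //; first by apply: vlin_form_neq0; exists k'.
  rewrite prodf_seq_neq0; apply/allP => i io /=; rewrite prodf_seq_neq0; apply/allP => j jo /=.
  by apply/implyP => ij; apply/vlin_form_neq0/(cross_meet_neq0 arr ij)/dot_lines_off.
have [b] := mpoly_nonroot Phi0; rewrite !mevalM rmorph_prod.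
under eq_bigr do rewrite rmorph_prod.
rewrite !mulf_eq0 !negb_or meval_vlin_form => /andP[/andP[ub bk] meet_b].
exists b; split=> //; first by exists k; rewrite -dot_cross_ek dotC.
move=> i j io jo ij; move: meet_b; rewrite prodf_seq_neq0 => /allP /(_ i io) /=.
by rewrite prodf_seq_neq0 => /allP /(_ j jo) /=; rewrite ij meval_vlin_form dotC.
Qed.

Lemma point_syz_primitive e (u : SS) (r : 'I_3 -> SS) :
  (0 < e)%N -> u \is e.-homog -> (forall j, point_syz j = u * r j) -> False.
Proof.
(* u has a root q on the line through P in a generic direction b, and rho q = 0
   makes q either the meeting point of two lines off P or the point P itself;
   the choice of b excludes both. *)
move=> e0 u_homog syz_ur.
have [k0 Pk0] := point_neq0.
have d0 : (d%:R : CC) != 0 by rewrite pnatr_eq0 -lt0n arr_size_gt0.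
have uP : u.@[P] != 0.
  by have := meval_point_syz_neq0 Pk0; rewrite syz_ur mevalM mulf_eq0 negb_or => /andP[].
have u0 : u != 0 by apply: contraNneq uP => ->; rewrite meval0.
have [b [ub [k bPk] meet_b]] := exists_generic_direction u0.
have [t] := lead_at_root (lead_at_line_restr P b u_homog) ub e0.
rewrite /root horner_line_restr => /eqP uq.
set q := fun j => P j + t * b j in uq.
have syz_q j : (dderiv P h).@[q] * q j = d%:R * h.@[q] * P j.
  apply/eqP; rewrite -subr_eq0; apply/eqP.
  have := congr1 (meval q) (syz_ur j); rewrite mevalM uq mul0r.
  by rewrite mevalB !mevalM mevalMn meval1 mevalXU mevalC.
have [Dq0|Dq] := eqVneq (dderiv P h).@[q] 0.
  have hq0 : h.@[q] = 0.
    have /esym/eqP := syz_q k0; rewrite Dq0 mul0r !mulf_eq0 (negbTE d0) (negbTE Pk0) orbF.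
    by move/eqP.
  have [[i [j [io jo ij iq jq]]]|[i io [_ iP]]] := lprod_singular uniq_lines_off hq0 Dq0.
    have /negP := meet_b i j io jo ij; apply; apply/eqP.
    rewrite -(dot_cross_line _ _ _ t) /dot big1 // => k1 _.
    by rewrite (cross_meet_eq0 iq jq) mulr0.
  by have := dot_lines_off io; rewrite iP eqxx.
have t0 : t != 0.
  apply: contraNneq uP => t0; apply/eqP; rewrite -uq; apply: meval_eq => j.
  by rewrite /q t0 mul0r addr0.
have : t * cross b P k = 0.
  rewrite -cross_line_self; apply: (cross_prop_eq0 (c := d%:R * h.@[q] / (dderiv P h).@[q])) => j.
  by apply: (mulfI Dq); rewrite syz_q; field.
by apply/eqP; rewrite mulf_eq0 negb_or t0.
Qed.

Lemma point_syz_degree K (deg : 'I_K -> nat) (rho : 'I_K -> 'I_3 -> SS) (U : 'I_K -> SS) k0 :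
  (forall k, homog3 (deg k) (rho k)) ->
  (forall k, k != k0 -> size lines_off < deg k)%N ->
  (forall j, point_syz j = \sum_(k < K) U k * rho k j) ->
  size lines_off = deg k0.
Proof.
set n0 := size lines_off => rho_homog deg_gt syzE.
have syz_k0 j : point_syz j =
    if (deg k0 <= n0)%N then pihomog mdeg (n0 - deg k0) (U k0) * rho k0 j else 0.
  rewrite -(pihomog_dE (point_syz_homog j)) syzE raddf_sum (bigD1 k0) //= big1 ?addr0.
    exact: pihomogM_homog (rho_homog k0 j).
  by move=> k /deg_gt lt_n0; rewrite (pihomogM_homog _ _ (rho_homog k j)) leqNgt lt_n0.
have [le_n0|lt_n0] := leqP (deg k0) n0; last first.
  have [k Pk] := point_neq0.
  by have := meval_point_syz_neq0 Pk; rewrite syz_k0 leqNgt lt_n0 meval0 eqxx.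
have [//|gt0] := posnP (n0 - deg k0); first by lia.
exfalso; apply: (point_syz_primitive gt0 (pihomogP mdeg _ (U k0))) => j.
by rewrite syz_k0 le_n0.
Qed.

Lemma nearly_free_multiplicity d1 d2 :
  nearly_free_with_exponents (arr_poly l) d d1 d2 ->
  multiplicity l p = d2 \/ (multiplicity l p <= d1)%N.
Proof.
move=> [_ [sum_d [rho [_ [_ rho_homog rho_gen _ _]]]]].
have [|lt_d1] := leqP (multiplicity l p) d1; [by right | left].
have [U syzE] := rho_gen _ point_syz_AR.
have := size_lines_through_off; rewrite -multiplicityE => sizeE.
suff : size lines_off = d1 by lia.
apply: (point_syz_degree (k0 := ord0) rho_homog _ syzE).
by move=> k /negbTE ->; lia.
Qed.

Lemma free_multiplicity d1 d2 : d = (d1 + d2).+1 ->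
  free_with_exponents (arr_poly l) d1 d2 ->
  multiplicity l p = d2.+1 \/ (multiplicity l p <= d1.+1)%N.
Proof.
move=> sum_d [_ [r1 [r2 [_ _ r1_homog r2_homog r_gen]]]].
have [|lt_d1] := leqP (multiplicity l p) d1.+1; [by right | left].
have [[a b] [syzE _]] := r_gen _ point_syz_AR.
have := size_lines_through_off; rewrite -multiplicityE => sizeE.
suff : size lines_off = d1 by lia.
apply: (@point_syz_degree 2 (fun k => if k == ord0 then d1 else d2)
  (fun k => if k == ord0 then r1 else r2) (fun k => if k == ord0 then a else b) ord0).
- by move=> k; case: ifP.
- by move=> k /negbTE ->; lia.
- by move=> j; rewrite big_ord_recl big_ord1 /= syzE.
Qed.

End PointSyzygy.

Lemma bezout3 (F : closedFieldType) (Q : 'I_3 -> {poly F}) :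
  (forall x, exists j, ~~ root (Q j) x) -> exists A, dot A Q = 1.
Proof.
move=> no_common_root.
have cop : coprimep (gcdp (Q i0) (Q i1)) (Q i2).
  apply/Pdiv.ClosedField.coprimepP => x; rewrite root_gcd => /andP[r0 r1].
  have [j] := no_common_root x; move: j; apply: ord3_ind; by rewrite ?r0 ?r1.
have [[u v] /= uv1] := Bezout_eq1_coprimepP _ _ cop.
have [[c1 c2] /= /andP[c1_0 _] gcdE] := eqpP _ _ (egcdpE (Q i0) (Q i1)).
exists (fun j => if val j == 0%N then u * (c2 / c1)%:P * (egcdp (Q i0) (Q i1)).1
                 else if val j == 1%N then u * (c2 / c1)%:P * (egcdp (Q i0) (Q i1)).2
                 else v).
rewrite dotE /= -uv1 -[gcdp _ _](scalerK c1_0) gcdE scalerA -mul_polyC; ring.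
Qed.

Lemma cross_koszul_const (F : fieldType) (Q R1 R2 A : 'I_3 -> {poly F}) :
  dot R1 Q = 0 -> dot R2 Q = 0 -> dot A Q = 1 ->
  (forall k, exists al be, forall j, cross (ek _ k) Q j = al * R1 j + be * R2 j) ->
  exists2 c : F, c != 0 & forall k, cross R1 R2 k = c *: Q k.
Proof.
move=> R1Q R2Q AQ koszul.
have [c Wc] : exists c, forall k, cross R1 R2 k = c * Q k.
  have: forall i j, cross R1 R2 i * Q j = cross R1 R2 j * Q i.
    by apply: cross_eq0 => k; rewrite cross_cross R1Q R2Q !mulr0 subrr.
  move: (cross R1 R2) => W WQ; exists (dot A W) => k.
  rewrite -[W k]mulr1 -AQ !dotE !mulrDr !(mulrCA (W k)) (WQ k i0) (WQ k i1) (WQ k i2).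
  ring.
have [Q0|[k0 Qk0]] := vec_eq0_or_neq0 Q.
  by move: AQ; rewrite dotE !Q0 !mulr0 !addr0 => /eqP; rewrite eq_sym oner_eq0.
have c_dvd k1 k2 : c %| cross (ek _ k2) Q k1.
  have [a1 [b1 koszul1]] := koszul k1; have [a2 [b2 koszul2]] := koszul k2.
  apply/dvdpP; exists (a1 * b2 - a2 * b1); apply: (mulIf Qk0).
  rewrite -[cross _ _ k1]dot_ek dotC -cross_cross_common.
  by rewrite (cross_lin_comb koszul1 koszul2) Wc mulrA.
have c_dvdQ j : c %| Q j.
  move: j; apply: ord3_ind; [move: (c_dvd i1 i2) | move: (c_dvd i2 i0) | move: (c_dvd i0 i1)];
    by rewrite /cross /ek /= mul1r mul0r subr0.
have : c %| 1 by rewrite -AQ dotE !dvdp_add // dvdp_mull.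
rewrite dvdp1 => /size_poly1P[c0 c0_0 cE].
by exists c0 => // k; rewrite Wc cE mul_polyC.
Qed.

Lemma cross_homog (u v : 'I_3 -> SS) e1 e2 :
  homog3 e1 u -> homog3 e2 v -> homog3 (e1 + e2) (cross u v).
Proof. by move=> hu hv; apply: ord3_ind; apply: rpredB; apply: dhomogM. Qed.

Section Saito.
Variables (d : nat) (l : 'I_d -> 'rV[CC]_3) (d1 d2 : nat) (r1 r2 : 'I_3 -> SS).
Hypothesis arr : line_arrangement l.
Hypothesis d_gt0 : (0 < d)%N.
Hypotheses (r1_AR : in_AR (arr_poly l) r1) (r2_AR : in_AR (arr_poly l) r2).
Hypotheses (r1_homog : homog3 d1 r1) (r2_homog : homog3 d2 r2).
Hypothesis r_basis : forall r, in_AR (arr_poly l) r ->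
  exists! uv : SS * SS, forall j, r j = uv.1 * r1 j + uv.2 * r2 j.

Local Notation f := (arr_poly l).
Local Notation grad := (fun j => f^`M(j)).

Lemma free_basis_indep a b : (forall j, a * r1 j + b * r2 j = 0) -> a = 0 /\ b = 0.
Proof.
move=> ab0; have zero_AR : in_AR f (fun _ => 0) by rewrite /in_AR big1 // => j _; rewrite mul0r.
have [uv [_ uv_uniq]] := r_basis zero_AR.
have uv0 : uv = (0, 0) by apply: uv_uniq => j; rewrite /= !mul0r addr0.
have uvab : uv = (a, b) by apply: uv_uniq => j; rewrite ab0.
by move: uvab; rewrite uv0 => -[<- <-].
Qed.

Lemma free_basis_cross_neq0 : exists k, cross r1 r2 k != 0.
Proof.
have [r1_0|[j0 r1j0]] := vec_eq0_or_neq0 r1.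
  have [/eqP] : (1 : SS) = 0 /\ (0 : SS) = 0.
    by apply: free_basis_indep => j; rewrite r1_0 mulr0 mul0r addr0.
  by rewrite oner_eq0.
have [W0|//] := vec_eq0_or_neq0 (cross r1 r2).
have [_ r1j0_0] : - r2 j0 = 0 /\ r1 j0 = 0.
  by apply: free_basis_indep => j; rewrite mulNr (cross_eq0 W0 j0 j) mulrC addNr.
by rewrite r1j0_0 eqxx in r1j0.
Qed.

Lemma koszul_AR k : in_AR f (cross (ek _ k) grad).
Proof. by rewrite /in_AR -/(dot _ grad) dotC 2!dot_cross_cyc dot_cross_self. Qed.

Lemma exists_generic_line (W : SS) : W != 0 ->
  exists a b, [/\ f.@[b] != 0, W.@[b] != 0 &
    forall x i j, i != j ->
      dot (rv (l i)) (fun k => a k + x * b k) = 0 ->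
      dot (rv (l j)) (fun k => a k + x * b k) = 0 -> False].
Proof.
move=> W0; have [b] := mpoly_nonroot (mulf_neq0 (arr_poly_neq0 arr) W0).
rewrite mevalM mulf_eq0 negb_or => /andP[fb Wb].
pose Phi := \prod_(i <- index_enum 'I_d) \prod_(j <- index_enum 'I_d | i != j)
              vlin_form (cross b (meet l i j)).
have Phi0 : Phi != 0.
  rewrite prodf_seq_neq0; apply/allP => i _ /=; rewrite prodf_seq_neq0; apply/allP => j _ /=.
  apply/implyP => ij; apply: vlin_form_neq0.
  have [k] := cross_meet_neq0 arr ij (dot_line_neq0 i fb).
  by exists k; rewrite crossC oppr_eq0.
have [a] := mpoly_nonroot Phi0; rewrite /Phi rmorph_prod.
under eq_bigr do rewrite rmorph_prod.
move=> Phi_a; exists a, b; split=> // x i j ij liq ljq.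
move: Phi_a; rewrite prodf_seq_neq0 => /allP /(_ i (mem_index_enum _)) /=.
rewrite prodf_seq_neq0 => /allP /(_ j (mem_index_enum _)) /=.
rewrite ij meval_vlin_form dotC dot_cross_cyc -(dot_cross_line _ _ _ x) /dot big1 ?eqxx // => k _.
by rewrite (cross_meet_eq0 liq ljq) mulr0.
Qed.

Lemma restr_grad_no_common_root a b :
  (forall x i j, i != j ->
      dot (rv (l i)) (fun k => a k + x * b k) = 0 ->
      dot (rv (l j)) (fun k => a k + x * b k) = 0 -> False) ->
  forall x, exists j, ~~ root (line_restr a b (grad j)) x.
Proof.
move=> avoid x.
have [grad0|[j gj]] := vec_eq0_or_neq0 (fun j => (line_restr a b (grad j)).[x]); last by exists j.
have gradq0 j : (grad j).@[fun k => a k + x * b k] = 0 by rewrite -horner_line_restr grad0.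
have [i [j [ij lix ljx]]] := arr_poly_grad_eq0 arr d_gt0 gradq0.
by case: (avoid x i j ij lix ljx).
Qed.

Lemma free_basis_degree_sum : d = (d1 + d2).+1.
Proof.
have [k1 Wk1] := free_basis_cross_neq0.
have [a [b [fb Wb avoid]]] := exists_generic_line Wk1.
have [A AQ] := bezout3 (restr_grad_no_common_root avoid).
have [c c0 WQ] : exists2 c : CC, c != 0 & forall k,
    cross (line_restr a b \o r1) (line_restr a b \o r2) k = c *: line_restr a b (grad k).
  have restr_AR r : in_AR f r -> dot (line_restr a b \o r) (line_restr a b \o grad) = 0.
    by move=> rAR; rewrite -(rmorph_dot (line_restr a b)) (rAR : dot r grad = 0) rmorph0.
  apply: (cross_koszul_const (restr_AR _ r1_AR) (restr_AR _ r2_AR) AQ).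
  move=> k; have [[al be] [uvE _]] := r_basis (koszul_AR k).
  exists (line_restr a b al), (line_restr a b be) => j.
  by rewrite -rmorph_cross_ek uvE rmorphD !rmorphM.
have size_W k : size (line_restr a b (cross r1 r2 k)) = size (line_restr a b (grad k)).
  by rewrite rmorph_cross WQ size_scale.
have lead_W k := lead_at_line_restr a b (cross_homog r1_homog r2_homog k).
have lead_grad k := lead_at_line_restr a b (arr_poly_grad_homog l k).
have [grad0|[k2 gk2]] := vec_eq0_or_neq0 (fun k => (grad k).@[b]).
  by rewrite (meval_arr_poly_eq0 d_gt0 grad0) eqxx in fb.
have := size_W k1; rewrite (lead_at_size (lead_W k1) Wb) => size1.
have := size_W k2; rewrite (lead_at_size (lead_grad k2) gk2) prednK // => size2.
have := (lead_W k2).1; have := (lead_grad k1).1; rewrite prednK //; lia.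
Qed.

End Saito.

Lemma free_exponents_sum d (l : 'I_d -> 'rV[CC]_3) d1 d2 :
  line_arrangement l -> (0 < d)%N ->
  free_with_exponents (arr_poly l) d1 d2 -> d = (d1 + d2).+1.
Proof. by move=> arr d_gt0 [_ [r1 [r2 []]]]; apply: free_basis_degree_sum. Qed.

Theorem corollary2p2 (d : nat) (l : 'I_d -> 'rV[CC]_3) (p : 'rV[CC]_3)
    (d1 d2 : nat) :
  line_arrangement l ->
  intersection_point l p ->
  (free_with_exponents (arr_poly l) d1 d2 ->
     multiplicity l p = d2.+1 \/ (multiplicity l p <= d1.+1)%nat) /\
  (nearly_free_with_exponents (arr_poly l) d d1 d2 ->
     multiplicity l p = d2 \/ (multiplicity l p <= d1)%nat).
Proof.
move=> arr p_int; split; last exact: nearly_free_multiplicity.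
move=> free; apply: (free_multiplicity arr p_int _ free).
exact: (free_exponents_sum arr (arr_size_gt0 p_int) free).
Qed.
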